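(* In the instance constructed below, if some feasible packing (in 2DK, or in 2DKR with rotations allowed) contains $2k$ rectangles, then there exist values $a_1,\dots,a_k\in\mathcal A$ and an index $m\in\{1,\dots,k-1\}$ such that $\sum_{j=1}^m a_j=\sum_{j=m+1}^k a_j$.
   Context: Let $k\ge 9$ be an odd integer and $\mathcal A$ a multiset of $n$ positive integers; let $M=\max_{a\in\mathcal A}a$ and $N=2Mk^4$, $K=[0,N]\times[0,N]$. For each element $a$ of $\mathcal A$ (counted with multiplicity) create two items (rectangles) $R_a$ with width $w(R_a)=N/k+a$ and height $h(R_a)=N/2-a$, and $R'_a$ with width $w(R'_a)=N/k-a$ and height $h(R'_a)=N/2+a$, each of profit $1$. A feasible packing places a subset of the items as pairwise disjoint open axis-parallel rectangles inside $K$; in 2DK the items keep their given orientation, in 2DKR each may be rotated by $90^\circ$. *)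

From Stdlib Require Import Reals List Arith.
Import ListNotations.
Open Scope R_scope.

Definition maxA (A : list nat) : nat := list_max A.
Definition bigN (A : list nat) (k : nat) : R := INR (2 * maxA A * k ^ 4).

(* Item of element a: b = false gives R_a, b = true gives R'_a. *)
Definition item_w (A : list nat) (k a : nat) (b : bool) : R :=
  if b then bigN A k / INR k - INR a else bigN A k / INR k + INR a.
Definition item_h (A : list nat) (k a : nat) (b : bool) : R :=
  if b then bigN A k / 2 + INR a else bigN A k / 2 - INR a.

Definition in_open_rect (x y w h px py : R) : Prop :=
  x < px < x + w /\ y < py < y + h.

(* The j-th packed item (j < cnt) is the
   item [sel j] = (index i into A, b) i.e. R_{A_i} (b=false) or R'_{A_i}
   (b=true); it is placed with lower-left corner (x j, y j), rotated by 90
   degrees iff [rot j] (allowed only when [rot_allowed], i.e. in 2DKR). *)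
Definition feasible_packing (rot_allowed : bool) (A : list nat) (k cnt : nat) :
  Prop :=
  exists (sel : nat -> nat * bool) (x y : nat -> R) (rot : nat -> bool),
    let a j := nth (fst (sel j)) A 0%nat in
    let w j := if rot j then item_h A k (a j) (snd (sel j))
               else item_w A k (a j) (snd (sel j)) in
    let h j := if rot j then item_w A k (a j) (snd (sel j))
               else item_h A k (a j) (snd (sel j)) in
    (forall j, (j < cnt)%nat -> (fst (sel j) < length A)%nat) /\
    (forall j l, (j < cnt)%nat -> (l < cnt)%nat -> sel j = sel l -> j = l) /\
    (forall j, (j < cnt)%nat -> rot j = true -> rot_allowed = true) /\
    (forall j, (j < cnt)%nat ->
       0 <= x j /\ x j + w j <= bigN A k /\ 0 <= y j /\ y j + h j <= bigN A k) /\
    (forall j l, (j < cnt)%nat -> (l < cnt)%nat -> j <> l ->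
       ~ (exists px py, in_open_rect (x j) (y j) (w j) (h j) px py /\
                        in_open_rect (x l) (y l) (w l) (h l) px py)).

(* Write B = N/k.  Give item j the signed size t_j = a for R_a and t_j = -a for R'_a;
   it is then either tall (B + t_j wide, N/2 - t_j high) or flat (the transpose).  It suffices
   to find k items whose signed sizes sum to 0: split by sign, they give the two equal sums.

   Every estimate integrates, over all lines parallel to one side of the square, the total
   length that the line meets inside the items; as the items a line meets are disjoint, this
   is at most N per line.  When all items are tall (or all flat), the items with centre below
   the midline y = N/2 cannot be stacked, nor can those above it, so each class has total
   width at most N = kB: each class has exactly k items and signed size sum <= 0.  Every
   horizontal line meets at most k items, so the heights N/2 - t_j sum to at most kN, i.e.
   the signed sizes sum to >= 0; hence the lower class sums to 0.  A tall item T and a flat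
   item F cannot both occur: as k is odd, a line meeting a long side N/2 +- M has room for at
   most (k-1)/2 short sides B +- M, leaving a deficit d of about B/2.  Integrating over
   vertical lines, the x-projections of the tall items overlap that of F very little, so every
   horizontal line through T has the deficit d too; integrating over horizontal lines then
   gives area + d h_T <= N^2, whereas each item has area at least (B - M) N/2, so the total
   area is at least N^2 - kMN > N^2 - d h_T. *)

From Stdlib Require Import Reals List Arith Lra Lia Psatz.
From Coquelicot Require Import Hierarchy RInt.
Import ListNotations.
Open Scope R_scope.

(** * Sums over lists of indices *)

Definition sumR (f : nat -> R) (l : list nat) : R :=
  fold_right (fun j acc => f j + acc) 0 l.

Lemma sumR_plus f g l : sumR (fun j => f j + g j) l = sumR f l + sumR g l.
Proof. induction l as [|j l IH]; simpl; [lra|]. rewrite IH; lra. Qed.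

Lemma sumR_minus f g l : sumR (fun j => f j - g j) l = sumR f l - sumR g l.
Proof. induction l as [|j l IH]; simpl; [lra|]. rewrite IH; lra. Qed.

Lemma sumR_scal c f l : sumR (fun j => c * f j) l = c * sumR f l.
Proof. induction l as [|j l IH]; simpl; [lra|]. rewrite IH; lra. Qed.

Lemma sumR_ext f g l : (forall j, In j l -> f j = g j) -> sumR f l = sumR g l.
Proof.
  induction l as [|j l IH]; simpl; intros H; [lra|].
  rewrite H, IH by auto. reflexivity.
Qed.

Lemma sumR_le f g l : (forall j, In j l -> f j <= g j) -> sumR f l <= sumR g l.
Proof.
  induction l as [|j l IH]; simpl; intros H; [lra|].
  assert (f j <= g j) by auto. assert (sumR f l <= sumR g l) by auto. lra.
Qed.

Lemma sumR_const c l : sumR (fun _ => c) l = INR (length l) * c.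
Proof.
  induction l as [|j l IH]; [simpl; lra|].
  cbn [sumR fold_right length]. fold (sumR (fun _ => c) l). rewrite IH, S_INR. lra.
Qed.

Lemma sumR_filter (P : nat -> bool) f l :
  sumR f (filter P l) = sumR (fun j => if P j then f j else 0) l.
Proof. induction l as [|j l IH]; simpl; [lra|]. destruct (P j); simpl; rewrite IH; lra. Qed.

Lemma sumR_partition (P : nat -> bool) f l :
  sumR f l = sumR f (filter P l) + sumR f (filter (fun j => negb (P j)) l).
Proof.
  rewrite !sumR_filter, <- sumR_plus. apply sumR_ext. intros j _. destruct (P j); simpl; lra.
Qed.

Lemma sumR_count (P : nat -> bool) l :
  sumR (fun j => if P j then 1 else 0) l = INR (length (filter P l)).
Proof. rewrite <- sumR_filter, sumR_const. ring. Qed.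

Lemma sumR_ge_length f c l : (forall j, In j l -> c <= f j) -> INR (length l) * c <= sumR f l.
Proof. intro H. rewrite <- sumR_const. now apply sumR_le. Qed.

Lemma sumR_le_length f c l : (forall j, In j l -> f j <= c) -> sumR f l <= INR (length l) * c.
Proof. intro H. rewrite <- sumR_const. now apply sumR_le. Qed.

Lemma length_filter_le_1 (P : nat -> bool) l : NoDup l ->
  (forall i j, In i l -> In j l -> i <> j -> P i = true -> P j = true -> False) ->
  (length (filter P l) <= 1)%nat.
Proof.
  induction l as [|i l IH]; simpl; intros Hnd Hex; [lia|].
  apply NoDup_cons_iff in Hnd as [Hi Hnd].
  destruct (P i) eqn:Pi; simpl.
  - enough (filter P l = []) as -> by (simpl; lia).
    destruct (filter P l) as [|j l'] eqn:E; [reflexivity|exfalso].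
    assert (Hj : In j (filter P l)) by (rewrite E; left; reflexivity).
    apply filter_In in Hj as [Hj Pj].
    apply (Hex i j); auto. intros ->. contradiction.
  - apply IH; auto. intros i' j' Hi' Hj'. apply Hex; auto.
Qed.

Lemma length_filter_pos {A : Type} (P : A -> bool) l j :
  In j l -> P j = true -> (1 <= length (filter P l))%nat.
Proof.
  intros Hj Pj. destruct (filter P l) eqn:E; simpl; [|lia].
  assert (Hf : In j (filter P l)) by (now apply filter_In). now rewrite E in Hf.
Qed.

Lemma existsb_false {A : Type} (f : A -> bool) l :
  existsb f l = false -> forall j, In j l -> f j = false.
Proof.
  intros E j Hj. destruct (f j) eqn:Fj; [|reflexivity].
  rewrite <- E. symmetry. apply existsb_exists. eauto.
Qed.

(** * Open intervals and integrated loads *)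

Definition inside (l r p : R) : bool :=
  if Rlt_dec l p then if Rlt_dec p r then true else false else false.

Lemma insideP l r p : Bool.reflect (l < p < r) (inside l r p).
Proof.
  unfold inside. destruct (Rlt_dec l p), (Rlt_dec p r); constructor; lra.
Qed.

Lemma inside_iff l r p : inside l r p = true <-> l < p < r.
Proof. destruct (insideP l r p); split; auto; discriminate. Qed.

Definition indicator (l r p : R) : R := if inside l r p then 1 else 0.

Lemma is_RInt_const_R (a b v : R) : is_RInt (fun _ => v) a b ((b - a) * v).
Proof. exact (is_RInt_const a b v). Qed.

Lemma is_RInt_indicator a b l r : a <= l -> l <= r -> r <= b ->
  is_RInt (indicator l r) a b (r - l).
Proof.
  intros Hal Hlr Hrb.
  assert (Hpiece : forall u v c, (forall p, u < p < v -> indicator l r p = c) ->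
            u <= v -> is_RInt (indicator l r) u v ((v - u) * c)).
  { intros u v c Hc Huv. eapply is_RInt_ext; [|apply is_RInt_const_R].
    intros p. rewrite Rmin_left, Rmax_right by lra. intro Hp. now rewrite Hc. }
  assert (Hout : forall p, ~ (l < p < r) -> indicator l r p = 0).
  { intros p Hp. unfold indicator. now destruct (insideP l r p). }
  assert (Hin : forall p, l < p < r -> indicator l r p = 1).
  { intros p Hp. unfold indicator. now destruct (insideP l r p). }
  pose proof (Hpiece a l 0 (fun p Hp => Hout p ltac:(lra)) Hal) as H1.
  pose proof (Hpiece l r 1 Hin Hlr) as H2.
  pose proof (Hpiece r b 0 (fun p Hp => Hout p ltac:(lra)) Hrb) as H3.
  pose proof (is_RInt_Chasles _ _ _ _ _ _ (is_RInt_Chasles _ _ _ _ _ _ H1 H2) H3) as H.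
  replace (r - l) with ((l - a) * 0 + (r - l) * 1 + (b - r) * 0) by ring. exact H.
Qed.

Lemma is_RInt_scaled_indicator c a b l r : a <= l -> l <= r -> r <= b ->
  is_RInt (fun p => c * indicator l r p) a b (c * (r - l)).
Proof. intros. now apply (is_RInt_scal (indicator l r)), is_RInt_indicator. Qed.

Lemma is_RInt_Rplus f g a b u v :
  is_RInt f a b u -> is_RInt g a b v -> is_RInt (fun p => f p + g p) a b (u + v).
Proof. exact (is_RInt_plus f g a b u v). Qed.

Lemma is_RInt_sumR (F : nat -> R -> R) (V : nat -> R) a b l :
  (forall j, In j l -> is_RInt (F j) a b (V j)) ->
  is_RInt (fun p => sumR (fun j => F j p) l) a b (sumR V l).
Proof.
  induction l as [|j l IH]; simpl; intros H.
  - pose proof (is_RInt_const_R a b 0) as H0. now rewrite Rmult_0_r in H0.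
  - apply is_RInt_Rplus; auto.
Qed.

Lemma is_RInt_le_const f a b v C : a <= b -> is_RInt f a b v ->
  (forall p, a < p < b -> f p <= C) -> v <= C * (b - a).
Proof.
  intros Hab Hf HC. rewrite Rmult_comm.
  exact (is_RInt_le f (fun _ => C) a b v _ Hab Hf (is_RInt_const_R a b C) HC).
Qed.

Lemma weighted_length_le (c lo hi : nat -> R) (l : list nat) a b C : a <= b ->
  (forall j, In j l -> a <= lo j /\ lo j <= hi j /\ hi j <= b) ->
  (forall p, a < p < b -> sumR (fun j => c j * indicator (lo j) (hi j) p) l <= C) ->
  sumR (fun j => c j * (hi j - lo j)) l <= C * (b - a).
Proof.
  intros Hab Hl Hload.
  apply (is_RInt_le_const (fun p => sumR (fun j => c j * indicator (lo j) (hi j) p) l) a b);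
    [exact Hab| |exact Hload].
  apply is_RInt_sumR. intros j Hj. destruct (Hl j Hj) as [? []].
  now apply is_RInt_scaled_indicator.
Qed.

Lemma disjoint_lengths_le (l : list nat) (lo len : nat -> R) (L : R) :
  0 <= L -> NoDup l ->
  (forall j, In j l -> 0 <= lo j /\ 0 <= len j /\ lo j + len j <= L) ->
  (forall i j p, In i l -> In j l -> i <> j ->
     inside (lo i) (lo i + len i) p = true -> inside (lo j) (lo j + len j) p = true -> False) ->
  sumR len l <= L.
Proof.
  intros HL Hnd Hl Hdisj.
  replace (sumR len l) with (sumR (fun j => 1 * (lo j + len j - lo j)) l)
    by (apply sumR_ext; intros; ring).
  replace L with (1 * (L - 0)) by ring.
  apply weighted_length_le; [lra| |].
  - intros j Hj. destruct (Hl j Hj) as [? []]. lra.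
  - intros p _.
    replace (sumR _ l) with (sumR (fun j => if inside (lo j) (lo j + len j) p then 1 else 0) l)
      by (apply sumR_ext; intros j _; unfold indicator; destruct (inside _ _ p); ring).
    rewrite sumR_count. apply (le_INR _ 1), length_filter_le_1; [exact Hnd|].
    intros i j Hi Hj Hij. exact (Hdisj i j p Hi Hj Hij).
Qed.

Lemma disjoint_open_intervals a1 b1 a2 b2 : a1 < b1 -> a2 < b2 ->
  (forall p, inside a1 b1 p = true -> inside a2 b2 p = true -> False) ->
  b1 <= a2 \/ b2 <= a1.
Proof.
  intros H1 H2 H.
  destruct (Rle_dec b1 a2); [now left|]. destruct (Rle_dec b2 a1); [now right|].
  exfalso. apply (H ((Rmax a1 a2 + Rmin b1 b2) / 2)); apply inside_iff;
    unfold Rmax, Rmin; destruct (Rle_dec a1 a2), (Rle_dec b1 b2); lra.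
Qed.

Lemma indicator_intersection a b c d p : a <= b -> c <= d ->
  indicator (Rmax a c) (Rmax (Rmax a c) (Rmin b d)) p = indicator a b p * indicator c d p.
Proof.
  intros H1 H2. unfold indicator.
  destruct (insideP a b p), (insideP c d p), (insideP (Rmax a c) (Rmax (Rmax a c) (Rmin b d)) p);
    try ring; exfalso;
    repeat match goal with H : context [p] |- _ => revert H end;
    unfold Rmin; destruct (Rle_dec b d); unfold Rmax; destruct (Rle_dec a c);
    match goal with |- context [Rle_dec ?u ?v] => destruct (Rle_dec u v) end;
    intros; intuition lra.
Qed.

(** * Packings of the normalised instance *)

Definition crossing (lo len : nat -> R) (n : nat) (p : R) : list nat :=
  filter (fun j => inside (lo j) (lo j + len j) p) (seq 0 n).

Lemma crossing_spec lo len n p j :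
  In j (crossing lo len n p) <-> (j < n)%nat /\ inside (lo j) (lo j + len j) p = true.
Proof. unfold crossing. rewrite filter_In, in_seq. split; intros [H1 H2]; split; auto; lia. Qed.

Lemma NoDup_crossing lo len n p : NoDup (crossing lo len n p).
Proof. apply NoDup_filter, seq_NoDup. Qed.

Lemma sumR_indicator_crossing c lo len n p :
  sumR (fun j => c j * indicator (lo j) (lo j + len j) p) (seq 0 n) = sumR c (crossing lo len n p).
Proof.
  unfold crossing. rewrite sumR_filter. apply sumR_ext. intros j _.
  unfold indicator. destruct (inside _ _ p); ring.
Qed.

Section Packing.

Variables (k : nat) (M N : R) (t : nat -> R).

Record packing (x y w h : nat -> R) (tall : nat -> bool) : Prop := {
  t_bounded : forall j, (j < 2 * k)%nat -> - M <= t j <= M;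
  width_def : forall j, (j < 2 * k)%nat ->
    w j = if tall j then N / INR k + t j else N / 2 - t j;
  height_def : forall j, (j < 2 * k)%nat ->
    h j = if tall j then N / 2 - t j else N / INR k + t j;
  in_square : forall j, (j < 2 * k)%nat ->
    0 <= x j /\ x j + w j <= N /\ 0 <= y j /\ y j + h j <= N;
  interiors_disjoint : forall i j p q, (i < 2 * k)%nat -> (j < 2 * k)%nat -> i <> j ->
    inside (x i) (x i + w i) p = true -> inside (y i) (y i + h i) q = true ->
    inside (x j) (x j + w j) p = true -> inside (y j) (y j + h j) q = true -> False }.

Lemma packing_transpose x y w h tall :
  packing x y w h tall -> packing y x h w (fun j => negb (tall j)).
Proof.
  intros [Ht Hw Hh Hsq Hdisj]. split; auto.
  - intros j Hj. rewrite Hh by exact Hj. now destruct (tall j).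
  - intros j Hj. rewrite Hw by exact Hj. now destruct (tall j).
  - intros j Hj. destruct (Hsq j Hj) as [? [? []]]. auto.
  - intros i j p q Hi Hj Hij H1 H2 H3 H4. exact (Hdisj i j q p Hi Hj Hij H2 H1 H4 H3).
Qed.

(* In the instance [N / k = 2 M k^3]; only [N / k >= 16 k M] is used. *)
Hypotheses (k_ge_9 : (9 <= k)%nat) (k_odd : Nat.odd k = true) (M_pos : 0 < M)
  (side_large : 16 * INR k * M <= N / INR k).

Lemma scale_facts :
  9 <= INR k /\ N = INR k * (N / INR k) /\ 9 * M <= INR k * M /\
  16 * (INR k * M) <= N / INR k /\ 9 * (N / INR k) <= N.
Proof.
  assert (Hk : 9 <= INR k) by (replace 9 with (INR 9) by (simpl; lra); now apply le_INR).
  assert (HN : N = INR k * (N / INR k)) by (field; lra).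
  split; [exact Hk|]. split; [exact HN|]. split; [nra|]. split; [lra|].
  rewrite HN at 2. assert (0 < N / INR k) by nra. nra.
Qed.

Lemma count_le_k (n : nat) : INR n * (N / INR k - M) <= N -> (n <= k)%nat.
Proof.
  intros H. destruct scale_facts as [Hk [HN [HkM [HB _]]]].
  set (B := N / INR k) in *.
  destruct (le_lt_dec n k) as [|Hn]; [assumption|exfalso].
  apply le_INR in Hn. rewrite S_INR in Hn.
  assert ((INR k + 1) * (B - M) <= INR n * (B - M)) by (apply Rmult_le_compat_r; lra).
  nra.
Qed.

(* As [k] is odd, a line meeting both a long and a short side leaves this much uncovered. *)
Local Notation deficit := (N / INR k / 2 - (INR k + 1) * M / 2).

Lemma deficit_large : 7 / 16 * (N / INR k) <= deficit.
Proof. destruct scale_facts as [_ [_ [HkM [HB _]]]]. lra. Qed.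

Section Line.

Variables (x y w h : nat -> R) (tall : nat -> bool).
Hypothesis pack : packing x y w h tall.

Lemma height_tall j : (j < 2 * k)%nat -> tall j = true -> N / 2 - M <= h j <= N / 2 + M.
Proof.
  intros Hj Tj. rewrite (height_def _ _ _ _ _ pack j Hj), Tj.
  pose proof (t_bounded _ _ _ _ _ pack j Hj). lra.
Qed.

Lemma height_flat j : (j < 2 * k)%nat -> tall j = false -> N / INR k - M <= h j <= N / INR k + M.
Proof.
  intros Hj Tj. rewrite (height_def _ _ _ _ _ pack j Hj), Tj.
  pose proof (t_bounded _ _ _ _ _ pack j Hj). lra.
Qed.

Lemma height_pos j : (j < 2 * k)%nat -> 0 < h j.
Proof.
  intros Hj. destruct scale_facts as [_ [_ [HkM [HB HN]]]].
  destruct (tall j) eqn:Tj.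
  - pose proof (height_tall j Hj Tj). lra.
  - pose proof (height_flat j Hj Tj). lra.
Qed.

Variable p : R.
Local Notation cross := (crossing x w (2 * k) p).

Lemma crossing_height_sum : sumR h cross <= N.
Proof.
  apply (disjoint_lengths_le _ y); [| apply NoDup_crossing | |].
  - destruct scale_facts as [_ [_ [HkM [HB HN]]]]. lra.
  - intros j Hj. apply crossing_spec in Hj as [Hj _].
    destruct (in_square _ _ _ _ _ pack j Hj) as [_ [_ []]]. pose proof (height_pos j Hj). lra.
  - intros i j q Hi Hj Hij Hqi Hqj.
    apply crossing_spec in Hi as [Hi Hpi], Hj as [Hj Hpj].
    exact (interiors_disjoint _ _ _ _ _ pack i j p q Hi Hj Hij Hpi Hqi Hpj Hqj).
Qed.

Lemma crossing_height_bounds :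
  let u := INR (length (filter tall cross)) in
  let v := INR (length (filter (fun j => negb (tall j)) cross)) in
  u * (N / 2 - M) + v * (N / INR k - M) <= sumR h cross <=
  u * (N / 2 + M) + v * (N / INR k + M).
Proof.
  intros u v. rewrite (sumR_partition tall).
  assert (Ht : forall j, In j (filter tall cross) -> N / 2 - M <= h j <= N / 2 + M).
  { intros j Hj. apply filter_In in Hj as [Hj Tj]. apply crossing_spec in Hj as [Hj _].
    exact (height_tall j Hj Tj). }
  assert (Hf : forall j, In j (filter (fun i => negb (tall i)) cross) ->
             N / INR k - M <= h j <= N / INR k + M).
  { intros j Hj. apply filter_In in Hj as [Hj Tj]. apply crossing_spec in Hj as [Hj _].
    apply Bool.negb_true_iff in Tj. exact (height_flat j Hj Tj). }
  split; apply Rplus_le_compat;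
    [apply sumR_ge_length | apply sumR_ge_length | apply sumR_le_length | apply sumR_le_length];
    intros j Hj; first [apply (Ht j Hj) | apply (Hf j Hj)].
Qed.

Lemma crossing_tall_le_1 F : In F cross -> tall F = false ->
  (length (filter tall cross) <= 1)%nat.
Proof.
  intros HF TF. destruct scale_facts as [_ [_ [HkM [HB HN]]]].
  pose proof crossing_height_sum as Hsum. destruct crossing_height_bounds as [Hlow _].
  assert (Hv : 1 <= INR (length (filter (fun j => negb (tall j)) cross)))
    by (apply (le_INR 1), (length_filter_pos _ _ F HF); now rewrite TF).
  destruct (le_lt_dec (length (filter tall cross)) 1) as [|Hu]; [assumption|exfalso].
  apply (le_INR 2) in Hu. replace (INR 2) with 2 in Hu by (simpl; lra).
  assert (2 * (N / 2 - M) <= INR (length (filter tall cross)) * (N / 2 - M))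
    by (apply Rmult_le_compat_r; lra).
  assert (1 * (N / INR k - M) <=
          INR (length (filter (fun j => negb (tall j)) cross)) * (N / INR k - M))
    by (apply Rmult_le_compat_r; lra).
  lra.
Qed.

Lemma crossing_deficit F T : In F cross -> tall F = false -> In T cross -> tall T = true ->
  sumR h cross <= N - deficit.
Proof.
  intros HF TF HT TT. destruct scale_facts as [_ [HN [HkM [HB _]]]].
  pose proof crossing_height_sum as Hsum. destruct crossing_height_bounds as [Hlow Hup].
  set (B := N / INR k) in *.
  set (v := INR (length (filter (fun j => negb (tall j)) cross))) in *.
  assert (Hu : length (filter tall cross) = 1%nat).
  { pose proof (crossing_tall_le_1 F HF TF). pose proof (length_filter_pos _ _ T HT TT). lia. }
  rewrite Hu in Hlow, Hup. simpl INR in Hlow, Hup.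
  destruct (proj1 (Nat.odd_spec k) k_odd) as [m Hm].
  assert (HK : INR k = 2 * INR m + 1) by (rewrite Hm, plus_INR, mult_INR; simpl; lra).
  assert (HmM : 0 <= INR m * M) by (apply Rmult_le_pos; [apply pos_INR | lra]).
  rewrite HK in HN, HB, HkM |- *.
  assert (Hv : v <= INR m).
  { destruct (le_lt_dec (length (filter (fun j => negb (tall j)) cross)) m) as [Hle|Hlt].
    - now apply le_INR.
    - exfalso. apply le_INR in Hlt. rewrite S_INR in Hlt. fold v in Hlt.
      assert ((INR m + 1) * (B - M) <= v * (B - M)) by (apply Rmult_le_compat_r; lra).
      lra. }
  assert (v * (B + M) <= INR m * (B + M)) by (apply Rmult_le_compat_r; lra).
  lra.
Qed.

Lemma crossing_flat_length : (forall j, In j cross -> tall j = false) -> (length cross <= k)%nat.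
Proof.
  intros Hflat. apply count_le_k.
  eapply Rle_trans; [|apply crossing_height_sum].
  apply sumR_ge_length. intros j Hj.
  destruct (crossing_spec x w (2 * k) p j) as [[Hj' _] _]; [exact Hj|].
  apply (height_flat j Hj' (Hflat j Hj)).
Qed.

End Line.

Lemma width_pos x y w h tall j : packing x y w h tall -> (j < 2 * k)%nat -> 0 < w j.
Proof. intros pack. exact (height_pos _ _ _ _ _ (packing_transpose _ _ _ _ _ pack) j). Qed.

Lemma unstacked_width_le x y w h tall (S : nat -> bool) : packing x y w h tall ->
  (forall i j, (i < 2 * k)%nat -> (j < 2 * k)%nat -> i <> j -> S i = true -> S j = true ->
     y i + h i <= y j -> False) ->
  sumR w (filter S (seq 0 (2 * k))) <= N.
Proof.
  intros pack Hstack.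
  assert (Hin : forall j, In j (filter S (seq 0 (2 * k))) -> (j < 2 * k)%nat /\ S j = true).
  { intros j Hj. apply filter_In in Hj as [Hj Sj]. apply in_seq in Hj. split; [lia|exact Sj]. }
  apply (disjoint_lengths_le _ x); [| apply NoDup_filter, seq_NoDup | |].
  - destruct scale_facts as [_ [_ [HkM [HB HN]]]]. lra.
  - intros j Hj. destruct (Hin j Hj) as [Hj' _].
    destruct (in_square _ _ _ _ _ pack j Hj') as [? [? _]].
    pose proof (width_pos _ _ _ _ _ j pack Hj'). lra.
  - intros i j p Hi Hj Hij Hpi Hpj.
    destruct (Hin i Hi) as [Hi' Si], (Hin j Hj) as [Hj' Sj].
    pose proof (height_pos _ _ _ _ _ pack i Hi'). pose proof (height_pos _ _ _ _ _ pack j Hj').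
    destruct (disjoint_open_intervals (y i) (y i + h i) (y j) (y j + h j)) as [Hij'|Hji]; try lra.
    + intros q Hqi Hqj.
      exact (interiors_disjoint _ _ _ _ _ pack i j p q Hi' Hj' Hij Hpi Hqi Hpj Hqj).
    + exact (Hstack i j Hi' Hj' Hij Si Sj Hij').
    + exact (Hstack j i Hj' Hi' (not_eq_sym Hij) Sj Si Hji).
Qed.

Lemma point_covered_at_most_once x y w h tall p q : packing x y w h tall ->
  sumR (fun j => indicator (y j) (y j + h j) q * indicator (x j) (x j + w j) p) (seq 0 (2 * k))
  <= 1.
Proof.
  intros pack.
  replace (sumR _ _) with
    (sumR (fun j => if (inside (y j) (y j + h j) q && inside (x j) (x j + w j) p)%bool
                    then 1 else 0) (seq 0 (2 * k))).
  2:{ apply sumR_ext. intros j _. unfold indicator.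
      destruct (inside _ _ q), (inside _ _ p); simpl; ring. }
  rewrite sumR_count. apply (le_INR _ 1), length_filter_le_1; [apply seq_NoDup|].
  intros i j Hi Hj Hij Pi Pj. apply in_seq in Hi, Hj.
  apply andb_prop in Pi as [Qi Pi], Pj as [Qj Pj].
  apply (interiors_disjoint _ _ _ _ _ pack i j p q); auto; lia.
Qed.

Section AllTall.

Variables (x y w h : nat -> R) (tall : nat -> bool).
Hypotheses (pack : packing x y w h tall) (all_tall : forall j, (j < 2 * k)%nat -> tall j = true).

Local Notation items := (seq 0 (2 * k)).

Lemma all_tall_sum_nonneg : 0 <= sumR t items.
Proof.
  pose proof (packing_transpose _ _ _ _ _ pack) as tpack.
  destruct scale_facts as [Hk [_ [HkM [HB HN]]]].
  assert (Hcount : forall q, (length (crossing y h (2 * k) q) <= k)%nat).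
  { intro q. apply (crossing_flat_length _ _ _ _ _ tpack). intros j Hj.
    apply crossing_spec in Hj as [Hj _]. now rewrite all_tall. }
  assert (Hheights : sumR (fun j => 1 * (y j + h j - y j)) items <= INR k * (N - 0)).
  { apply weighted_length_le; [lra| |].
    - intros j Hj. apply in_seq in Hj.
      destruct (in_square _ _ _ _ _ pack j ltac:(lia)) as [_ [_ []]].
      pose proof (height_pos _ _ _ _ _ pack j ltac:(lia)). lra.
    - intros q _. rewrite sumR_indicator_crossing, sumR_const, Rmult_1_r.
      apply le_INR, Hcount. }
  replace (sumR _ items) with (sumR (fun j => N / 2 - t j) items) in Hheights.
  - rewrite sumR_minus, sumR_const, length_seq, mult_INR in Hheights. simpl INR in Hheights. lra.
  - apply sumR_ext. intros j Hj. apply in_seq in Hj.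
    rewrite (height_def _ _ _ _ _ pack j ltac:(lia)), all_tall by lia. ring.
Qed.

Lemma tall_class_bound (S : nat -> bool) :
  (forall i j, (i < 2 * k)%nat -> (j < 2 * k)%nat -> i <> j -> S i = true -> S j = true ->
     y i + h i <= y j -> False) ->
  (length (filter S items) <= k)%nat /\
  INR (length (filter S items)) * (N / INR k) + sumR t (filter S items) <= N.
Proof.
  intros Hstack.
  assert (Hin : forall j, In j (filter S items) -> (j < 2 * k)%nat).
  { intros j Hj. apply filter_In in Hj as [Hj _]. apply in_seq in Hj. lia. }
  assert (Hw : sumR w (filter S items) =
               INR (length (filter S items)) * (N / INR k) + sumR t (filter S items)).
  { rewrite <- sumR_const, <- sumR_plus. apply sumR_ext. intros j Hj.
    now rewrite (width_def _ _ _ _ _ pack j (Hin j Hj)), all_tall by auto. }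
  assert (Hsum := unstacked_width_le _ _ _ _ _ S pack Hstack). rewrite Hw in Hsum.
  split; [|exact Hsum].
  apply count_le_k.
  assert (- M * INR (length (filter S items)) <= sumR t (filter S items)).
  { rewrite Rmult_comm. apply sumR_ge_length. intros j Hj.
    apply (t_bounded _ _ _ _ _ pack j (Hin j Hj)). }
  lra.
Qed.

Lemma all_tall_balanced :
  exists L, length L = k /\ (forall j, In j L -> (j < 2 * k)%nat) /\ sumR t L = 0.
Proof.
  destruct scale_facts as [Hk [_ [HkM [HB HN]]]].
  set (low j := if Rlt_dec (2 * y j + h j) N then true else false).
  assert (Hsq : forall j, (j < 2 * k)%nat -> 0 <= y j /\ y j + h j <= N)
    by (intros j Hj; destruct (in_square _ _ _ _ _ pack j Hj) as [_ [_ []]]; auto).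
  assert (Hh : forall j, (j < 2 * k)%nat -> N / 2 - M <= h j <= N / 2 + M)
    by (intros j Hj; exact (height_tall _ _ _ _ _ pack j Hj (all_tall j Hj))).
  destruct (tall_class_bound low) as [Hlow_len Hlow].
  { intros i j Hi Hj _ _ Lj Hij. unfold low in Lj.
    destruct (Rlt_dec (2 * y j + h j) N); [|discriminate].
    pose proof (Hsq i Hi). pose proof (Hh i Hi). pose proof (Hh j Hj). lra. }
  destruct (tall_class_bound (fun j => negb (low j))) as [Hhigh_len Hhigh].
  { intros i j Hi Hj _ Li _ Hij. unfold low in Li.
    destruct (Rlt_dec (2 * y i + h i) N); [discriminate|].
    pose proof (Hsq j Hj). pose proof (Hh i Hi). pose proof (Hh j Hj). lra. }
  assert (Hlen := filter_length low items). rewrite length_seq in Hlen.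
  assert (Hk_low : length (filter low items) = k) by lia.
  assert (Hk_high : length (filter (fun j => negb (low j)) items) = k) by lia.
  rewrite Hk_low in Hlow. rewrite Hk_high in Hhigh.
  assert (Htot := all_tall_sum_nonneg). rewrite (sumR_partition low) in Htot.
  assert (HNk : INR k * (N / INR k) = N) by (field; lra).
  exists (filter low items). split; [exact Hk_low|].
  split; [intros j Hj; apply filter_In in Hj as [Hj _]; apply in_seq in Hj; lia|].
  lra.
Qed.

End AllTall.

Section Mixed.

Variables (x y w h : nat -> R) (tall : nat -> bool) (T F : nat).
Hypotheses (pack : packing x y w h tall)
  (T_lt : (T < 2 * k)%nat) (T_tall : tall T = true)
  (F_lt : (F < 2 * k)%nat) (F_flat : tall F = false).

Local Notation items := (seq 0 (2 * k)).
Local Notation area := (sumR (fun j => w j * h j) items).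
(* [(ov_lo j, ov_hi j)] is the intersection of the x-projections of [j] and [F]; the outer
   [Rmax] keeps [ov_lo j <= ov_hi j] when it is empty. *)
Local Notation ov_lo j := (Rmax (x j) (x F)).
Local Notation ov_hi j := (Rmax (Rmax (x j) (x F)) (Rmin (x j + w j) (x F + w F))).
Local Notation overlap := (sumR (fun j => ov_hi j - ov_lo j) (filter tall items)).

Lemma area_lower : N * N - INR k * M * N <= area.
Proof.
  destruct scale_facts as [Hk [HN [HkM [HB HN9]]]].
  assert (Hitem : forall j, In j items -> (N / INR k - M) * (N / 2) <= w j * h j).
  { intros j Hj. apply in_seq in Hj.
    rewrite (width_def _ _ _ _ _ pack j ltac:(lia)), (height_def _ _ _ _ _ pack j ltac:(lia)).
    pose proof (t_bounded _ _ _ _ _ pack j ltac:(lia)).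
    set (B := N / INR k) in *.
    assert (0 <= (t j + M) * (N / 2 - B - M)) by (apply Rmult_le_pos; lra).
    assert (0 <= (M - t j) * (t j + M)) by (apply Rmult_le_pos; lra).
    destruct (tall j); nra. }
  apply sumR_ge_length in Hitem. rewrite length_seq, mult_INR in Hitem. simpl INR in Hitem.
  replace (N * N - INR k * M * N) with ((1 + 1) * INR k * ((N / INR k - M) * (N / 2)))
    by (field; lra).
  exact Hitem.
Qed.

Lemma overlap_in_square j : (j < 2 * k)%nat -> 0 <= ov_lo j /\ ov_lo j <= ov_hi j /\ ov_hi j <= N.
Proof.
  intros Hj.
  destruct (in_square _ _ _ _ _ pack j Hj) as [? [? _]].
  destruct (in_square _ _ _ _ _ pack F F_lt) as [? [? _]].
  pose proof (width_pos _ _ _ _ _ j pack Hj). pose proof (width_pos _ _ _ _ _ F pack F_lt).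
  unfold Rmax, Rmin;
    repeat match goal with |- context [Rle_dec ?u ?v] => destruct (Rle_dec u v) end; lra.
Qed.

Lemma overlap_indicator j p : (j < 2 * k)%nat ->
  indicator (ov_lo j) (ov_hi j) p = indicator (x j) (x j + w j) p * indicator (x F) (x F + w F) p.
Proof.
  intros Hj. pose proof (width_pos _ _ _ _ _ j pack Hj).
  pose proof (width_pos _ _ _ _ _ F pack F_lt). apply indicator_intersection; lra.
Qed.

Lemma vertical_load p :
  sumR (fun j => h j * indicator (x j) (x j + w j) p +
                 (if tall j then deficit else 0) * indicator (ov_lo j) (ov_hi j) p) items =
  sumR h (crossing x w (2 * k) p) +
  deficit * indicator (x F) (x F + w F) p * INR (length (filter tall (crossing x w (2 * k) p))).
Proof.
  rewrite sumR_plus, sumR_indicator_crossing, <- sumR_count, <- sumR_scal.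
  f_equal. rewrite <- sumR_indicator_crossing. apply sumR_ext. intros j Hj. apply in_seq in Hj.
  rewrite overlap_indicator by lia. destruct (tall j); ring.
Qed.

Lemma mixed_vertical_bound : area + deficit * overlap <= N * N.
Proof.
  destruct scale_facts as [Hk [HN [HkM [HB HN9]]]].
  assert (Hd : 0 <= deficit) by lra.
  assert (Hint : is_RInt (fun p => sumR (fun j => h j * indicator (x j) (x j + w j) p +
                    (if tall j then deficit else 0) * indicator (ov_lo j) (ov_hi j) p) items) 0 N
                  (sumR (fun j => h j * (x j + w j - x j) +
                    (if tall j then deficit else 0) * (ov_hi j - ov_lo j)) items)).
  { apply is_RInt_sumR. intros j Hj. apply in_seq in Hj.
    destruct (in_square _ _ _ _ _ pack j ltac:(lia)) as [? [? _]].
    pose proof (width_pos _ _ _ _ _ j pack ltac:(lia)).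
    destruct (overlap_in_square j ltac:(lia)) as [? []].
    apply is_RInt_Rplus; apply is_RInt_scaled_indicator; lra. }
  replace (area + deficit * overlap) with
    (sumR (fun j => h j * (x j + w j - x j) +
       (if tall j then deficit else 0) * (ov_hi j - ov_lo j)) items).
  2:{ rewrite sumR_plus, sumR_filter, <- sumR_scal. f_equal; apply sumR_ext; intros j _;
      [ring | destruct (tall j); ring]. }
  replace (N * N) with (N * (N - 0)) by ring.
  refine (is_RInt_le_const _ 0 N _ _ _ Hint _); [lra|]. intros p _. rewrite vertical_load.
  pose proof (crossing_height_sum _ _ _ _ _ pack p) as Hsum.
  unfold indicator at 1. destruct (inside (x F) (x F + w F) p) eqn:HpF; [|lra].
  assert (HF : In F (crossing x w (2 * k) p)) by (now apply crossing_spec).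
  destruct (filter tall (crossing x w (2 * k) p)) as [|T' rest] eqn:E.
  - change (INR (length [])) with 0. lra.
  - assert (HT' : In T' (filter tall (crossing x w (2 * k) p))) by (rewrite E; now left).
    apply filter_In in HT' as [HT' TT'].
    pose proof (crossing_deficit _ _ _ _ _ pack p F T' HF F_flat HT' TT').
    pose proof (crossing_tall_le_1 _ _ _ _ _ pack p F HF F_flat) as Hle. rewrite E in Hle.
    apply (le_INR _ 1) in Hle. change (INR 1) with 1 in Hle.
    assert (deficit * INR (length (T' :: rest)) <= deficit * 1) by (apply Rmult_le_compat_l; lra).
    lra.
Qed.

Lemma overlap_small : overlap <= N / 2 - M - deficit.
Proof.
  destruct scale_facts as [Hk [HN [HkM [HB HN9]]]]. pose proof deficit_large as Hd.
  pose proof area_lower. pose proof mixed_vertical_bound.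
  destruct (Rle_dec overlap (N / 2 - M - deficit)) as [|Hgt]; [assumption|exfalso].
  assert (7 / 16 * (N / INR k) * (7 / 18 * N) <= deficit * (N / 2 - M - deficit))
    by (apply Rmult_le_compat; lra).
  assert (deficit * (N / 2 - M - deficit) < deficit * overlap)
    by (apply Rmult_lt_compat_l; lra).
  assert (16 * (INR k * M) * N <= N / INR k * N) by (apply Rmult_le_compat_r; lra).
  assert (0 < INR k * M * N) by (apply Rmult_lt_0_compat; lra).
  lra.
Qed.

Lemma tall_line_width_bound q :
  (forall j, In j (crossing y h (2 * k) q) -> tall j = true) ->
  w F + sumR w (crossing y h (2 * k) q) - overlap <= N.
Proof.
  intros Htall. destruct scale_facts as [Hk [HN [HkM [HB HN9]]]].
  set (c j := indicator (y j) (y j + h j) q).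
  assert (Hint : is_RInt (fun p => 1 * indicator (x F) (x F + w F) p +
             sumR (fun j => c j * indicator (x j) (x j + w j) p +
                            - c j * indicator (ov_lo j) (ov_hi j) p) items) 0 N
           (1 * (x F + w F - x F) +
            sumR (fun j => c j * (x j + w j - x j) + - c j * (ov_hi j - ov_lo j)) items)).
  { destruct (in_square _ _ _ _ _ pack F F_lt) as [? [? _]].
    pose proof (width_pos _ _ _ _ _ F pack F_lt).
    apply is_RInt_Rplus.
    - apply is_RInt_scaled_indicator; lra.
    - apply is_RInt_sumR. intros j Hj. apply in_seq in Hj.
      destruct (in_square _ _ _ _ _ pack j ltac:(lia)) as [? [? _]].
      pose proof (width_pos _ _ _ _ _ j pack ltac:(lia)).
      destruct (overlap_in_square j ltac:(lia)) as [? []].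
      apply is_RInt_Rplus; apply is_RInt_scaled_indicator; lra. }
  apply (is_RInt_le_const _ 0 N _ 1) in Hint; [|lra|].
  - rewrite sumR_plus in Hint.
    replace (sumR (fun j => c j * (x j + w j - x j)) items) with (sumR w (crossing y h (2 * k) q))
      in Hint.
    2:{ rewrite <- sumR_indicator_crossing. apply sumR_ext. intros j _. unfold c. ring. }
    assert (sumR (fun j => c j * (ov_hi j - ov_lo j)) items <= overlap).
    { rewrite sumR_filter. apply sumR_le. intros j Hj. apply in_seq in Hj.
      destruct (overlap_in_square j ltac:(lia)) as [? []].
      unfold c, indicator. destruct (inside (y j) (y j + h j) q) eqn:Hq.
      - rewrite Htall by (apply crossing_spec; split; [lia|exact Hq]). lra.
      - destruct (tall j); lra. }
    replace (sumR (fun j => - c j * (ov_hi j - ov_lo j)) items)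
      with (- sumR (fun j => c j * (ov_hi j - ov_lo j)) items) in Hint.
    2:{ rewrite <- (Rmult_1_l (sumR _ _)), Ropp_mult_distr_l, <- sumR_scal.
        apply sumR_ext. intros j _. ring. }
    lra.
  - intros p _.
    assert (HA := point_covered_at_most_once _ _ _ _ _ p q pack).
    replace (sumR _ items) with
      ((1 - indicator (x F) (x F + w F) p) *
       sumR (fun j => indicator (y j) (y j + h j) q * indicator (x j) (x j + w j) p) items).
    2:{ rewrite <- sumR_scal. apply sumR_ext. intros j Hj. apply in_seq in Hj.
        rewrite overlap_indicator by lia. unfold c. ring. }
    assert (0 <= sumR (fun j => indicator (y j) (y j + h j) q * indicator (x j) (x j + w j) p)
                      items).
    { rewrite <- (Rmult_0_r (INR (length items))), <- sumR_const. apply sumR_le. intros j _.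
      unfold indicator. destruct (inside _ _ q), (inside _ _ p); lra. }
    unfold indicator at 1 2. destruct (inside (x F) (x F + w F) p); nra.
Qed.

Lemma horizontal_deficit q : inside (y T) (y T + h T) q = true ->
  sumR w (crossing y h (2 * k) q) <= N - deficit.
Proof.
  intros HqT. pose proof (packing_transpose _ _ _ _ _ pack) as tpack.
  assert (HT : In T (crossing y h (2 * k) q)) by (now apply crossing_spec).
  destruct (filter (fun j => negb (tall j)) (crossing y h (2 * k) q)) as [|G rest] eqn:E.
  - assert (Htall : forall j, In j (crossing y h (2 * k) q) -> tall j = true).
    { intros j Hj. destruct (tall j) eqn:Tj; [reflexivity|exfalso].
      assert (Hf : In j (filter (fun j => negb (tall j)) (crossing y h (2 * k) q)))
        by (apply filter_In; now rewrite Tj).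
      now rewrite E in Hf. }
    pose proof (tall_line_width_bound q Htall) as Hline. pose proof overlap_small.
    assert (N / 2 - M <= w F).
    { rewrite (width_def _ _ _ _ _ pack F F_lt), F_flat.
      pose proof (t_bounded _ _ _ _ _ pack F F_lt). lra. }
    lra.
  - assert (HG : In G (filter (fun j => negb (tall j)) (crossing y h (2 * k) q)))
      by (rewrite E; now left).
    apply filter_In in HG as [HG TG].
    apply (crossing_deficit _ _ _ _ _ tpack q T G HT); [now rewrite T_tall | exact HG | exact TG].
Qed.

Lemma mixed_horizontal_bound : area + deficit * h T <= N * N.
Proof.
  destruct scale_facts as [Hk [HN [HkM [HB HN9]]]].
  pose proof (packing_transpose _ _ _ _ _ pack) as tpack.
  assert (Hint : is_RInt (fun q => sumR (fun j => w j * indicator (y j) (y j + h j) q) items +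
                                   deficit * indicator (y T) (y T + h T) q) 0 N
                   (sumR (fun j => w j * (y j + h j - y j)) items + deficit * (y T + h T - y T))).
  { apply is_RInt_Rplus.
    - apply is_RInt_sumR. intros j Hj. apply in_seq in Hj.
      destruct (in_square _ _ _ _ _ pack j ltac:(lia)) as [_ [_ []]].
      pose proof (height_pos _ _ _ _ _ pack j ltac:(lia)).
      apply is_RInt_scaled_indicator; lra.
    - destruct (in_square _ _ _ _ _ pack T T_lt) as [_ [_ []]].
      pose proof (height_pos _ _ _ _ _ pack T T_lt).
      apply is_RInt_scaled_indicator; lra. }
  replace (area + deficit * h T) with
    (sumR (fun j => w j * (y j + h j - y j)) items + deficit * (y T + h T - y T))
    by (f_equal; [apply sumR_ext; intros; ring | ring]).
  replace (N * N) with (N * (N - 0)) by ring.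
  refine (is_RInt_le_const _ 0 N _ _ _ Hint _); [lra|]. intros q _.
  rewrite sumR_indicator_crossing. unfold indicator.
  destruct (inside (y T) (y T + h T) q) eqn:HqT.
  - pose proof (horizontal_deficit q HqT). lra.
  - pose proof (crossing_height_sum _ _ _ _ _ tpack q). lra.
Qed.

Lemma mixed_impossible : False.
Proof.
  destruct scale_facts as [Hk [HN [HkM [HB HN9]]]]. pose proof deficit_large as Hd.
  pose proof area_lower. pose proof mixed_horizontal_bound.
  pose proof (height_tall _ _ _ _ _ pack T T_lt T_tall) as HhT.
  assert (7 / 16 * (N / INR k) * (7 / 18 * N) <= deficit * h T)
    by (apply Rmult_le_compat; lra).
  assert (16 * (INR k * M) * N <= N / INR k * N) by (apply Rmult_le_compat_r; lra).
  assert (0 < INR k * M * N) by (apply Rmult_lt_0_compat; lra).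
  lra.
Qed.

End Mixed.

Theorem packing_balanced x y w h tall : packing x y w h tall ->
  exists L, length L = k /\ (forall j, In j L -> (j < 2 * k)%nat) /\ sumR t L = 0.
Proof.
  intros pack.
  assert (Hitems : forall j, (j < 2 * k)%nat -> In j (seq 0 (2 * k)))
    by (intros; apply in_seq; lia).
  destruct (existsb (fun j => negb (tall j)) (seq 0 (2 * k))) eqn:Eflat.
  - apply existsb_exists in Eflat as [F [HF TF]].
    apply in_seq in HF. apply Bool.negb_true_iff in TF.
    destruct (existsb tall (seq 0 (2 * k))) eqn:Etall.
    + apply existsb_exists in Etall as [T [HT TT]]. apply in_seq in HT.
      exfalso. exact (mixed_impossible _ _ _ _ _ T F pack ltac:(lia) TT ltac:(lia) TF).
    + apply (all_tall_balanced _ _ _ _ _ (packing_transpose _ _ _ _ _ pack)).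
      intros j Hj. now rewrite (existsb_false _ _ Etall j (Hitems j Hj)).
  - apply (all_tall_balanced _ _ _ _ _ pack). intros j Hj.
    apply Bool.negb_false_iff, (existsb_false _ _ Eflat j (Hitems j Hj)).
Qed.

End Packing.

(** * Back to the multiset *)

Lemma map_nth_seq_middle (d : nat) (l : list nat) : forall pre suf,
  map (fun i => nth i (pre ++ l ++ suf) d) (seq (length pre) (length l)) = l.
Proof.
  induction l as [|a l IH]; intros pre suf; [reflexivity|]. simpl.
  rewrite app_nth2, Nat.sub_diag by lia. f_equal.
  specialize (IH (pre ++ [a]) suf). rewrite <- app_assoc, length_app, Nat.add_1_r in IH.
  exact IH.
Qed.

Lemma INR_list_sum (g : nat -> nat) l : INR (list_sum (map g l)) = sumR (fun j => INR (g j)) l.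
Proof. induction l as [|j l IH]; simpl; [reflexivity|]. now rewrite plus_INR, IH. Qed.

Lemma length_le_list_sum (g : nat -> nat) l :
  (forall j, In j l -> (1 <= g j)%nat) -> (length l <= list_sum (map g l))%nat.
Proof.
  induction l as [|j l IH]; simpl; intros Hg; [lia|].
  specialize (Hg j (or_introl eq_refl)) as Hj. specialize (IH (fun i Hi => Hg i (or_intror Hi))).
  lia.
Qed.

Lemma signed_zero_sum_split (k : nat) (a : nat -> nat) (neg : nat -> bool) (L : list nat) :
  (1 <= k)%nat -> length L = k -> (forall j, In j L -> (1 <= a j)%nat) ->
  sumR (fun j => if neg j then - INR (a j) else INR (a j)) L = 0 ->
  exists f : nat -> nat,
    (forall i, (i < k)%nat -> In (f i) (map a L)) /\
    exists m, (1 <= m <= k - 1)%nat /\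
      list_sum (map f (seq 0 m)) = list_sum (map f (seq m (k - m))).
Proof.
  intros Hk HL Hpos Hsum.
  set (P := filter (fun j => negb (neg j)) L). set (Q := filter neg L).
  assert (HPQ : (length P + length Q)%nat = k).
  { rewrite <- HL, <- (filter_length (fun j => negb (neg j)) L). f_equal.
    apply (f_equal (@length nat)), filter_ext. intro j. now destruct (neg j). }
  assert (Hbal : list_sum (map a P) = list_sum (map a Q)).
  { apply INR_eq. rewrite !INR_list_sum. unfold P, Q. rewrite !sumR_filter.
    rewrite (sumR_ext _ (fun j => (if negb (neg j) then INR (a j) else 0) -
                                 (if neg j then INR (a j) else 0)) L) in Hsum
      by (intros j _; destruct (neg j); simpl; ring).
    rewrite sumR_minus in Hsum. lra. }
  assert (HP : (length P <= list_sum (map a P))%nat)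
    by (apply length_le_list_sum; intros j Hj; apply Hpos, (incl_filter _ L j Hj)).
  assert (HQ : (length Q <= list_sum (map a Q))%nat)
    by (apply length_le_list_sum; intros j Hj; apply Hpos, (incl_filter _ L j Hj)).
  exists (fun i => nth i (map a P ++ map a Q) 0%nat). split.
  - intros i Hi. assert (Hlen : (i < length (map a P ++ map a Q))%nat)
      by (rewrite length_app, !length_map; lia).
    apply nth_In with (d := 0%nat), in_app_or in Hlen.
    destruct Hlen as [Hin|Hin]; apply in_map_iff in Hin as [j [<- Hj]];
      apply in_map, (incl_filter _ L j Hj).
  - exists (length P). split.
    + destruct P as [|p P'], Q as [|q Q']; simpl in *; lia.
    + replace (k - length P)%nat with (length (map a Q)) by (rewrite length_map; lia).
      pose proof (map_nth_seq_middle 0 (map a P) [] (map a Q)) as E1.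
      pose proof (map_nth_seq_middle 0 (map a Q) (map a P) []) as E2.
      rewrite app_nil_r in E2. simpl in E1. rewrite length_map in E1, E2.
      now rewrite E1, E2.
Qed.

Lemma le_maxA A a : In a A -> (a <= maxA A)%nat.
Proof. intro Ha. exact (proj1 (Forall_forall _ _) (proj1 (list_max_le A _) (le_n _)) a Ha). Qed.

Lemma packing_of_feasible rot A k : feasible_packing rot A k (2 * k) ->
  exists (a : nat -> nat) (neg : nat -> bool) (x y w h : nat -> R) (tall : nat -> bool),
    (forall j, (j < 2 * k)%nat -> In (a j) A) /\
    packing k (INR (maxA A)) (bigN A k) (fun j => if neg j then - INR (a j) else INR (a j))
      x y w h tall.
Proof.
  intros [sel [x [y [rot_of [Hsel [_ [_ [Hsq Hdisj]]]]]]]]. cbv zeta in Hsq, Hdisj.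
  set (a j := nth (fst (sel j)) A 0%nat) in *.
  assert (HA : forall j, (j < 2 * k)%nat -> In (a j) A) by (intros; apply nth_In; auto).
  exists a, (fun j => snd (sel j)), x, y.
  exists (fun j => if rot_of j then item_h A k (a j) (snd (sel j))
                   else item_w A k (a j) (snd (sel j))),
    (fun j => if rot_of j then item_w A k (a j) (snd (sel j))
              else item_h A k (a j) (snd (sel j))),
    (fun j => negb (rot_of j)).
  split; [exact HA|]. split.
  - intros j Hj. pose proof (le_INR _ _ (le_maxA A (a j) (HA j Hj))). pose proof (pos_INR (a j)).
    destruct (snd (sel j)); lra.
  - intros j Hj. unfold item_w, item_h. destruct (rot_of j), (snd (sel j)); simpl; ring.
  - intros j Hj. unfold item_w, item_h. destruct (rot_of j), (snd (sel j)); simpl; ring.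
  - exact Hsq.
  - intros i j p q Hi Hj Hij Hpi Hqi Hpj Hqj. apply (Hdisj i j Hi Hj Hij).
    exists p, q. unfold in_open_rect. rewrite inside_iff in Hpi, Hqi, Hpj, Hqj. tauto.
Qed.

Lemma instance_short_side_large A k : (9 <= k)%nat -> 1 <= INR (maxA A) ->
  16 * INR k * INR (maxA A) <= bigN A k / INR k.
Proof.
  intros Hk HM. assert (Hk9 : 9 <= INR k) by (apply (le_INR 9) in Hk; simpl in Hk; lra).
  assert (HkM : 0 <= INR k * INR (maxA A)) by (apply Rmult_le_pos; lra).
  assert (81 * (INR k * INR (maxA A)) <= INR k * INR k * (INR k * INR (maxA A)))
    by (apply Rmult_le_compat_r; nra).
  unfold bigN. rewrite !mult_INR, pow_INR. field_simplify; [|lra]. simpl. lra.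
Qed.

Theorem mainTheorem10 (rot_allowed : bool) (k : nat) (A : list nat) :
  (9 <= k)%nat -> Nat.odd k = true ->
  Forall (fun a => (0 < a)%nat) A ->
  feasible_packing rot_allowed A k (2 * k) ->
  exists f : nat -> nat,
    (forall j, (j < k)%nat -> In (f j) A) /\
    exists m, (1 <= m <= k - 1)%nat /\
      list_sum (map f (seq 0 m)) = list_sum (map f (seq m (k - m))).
Proof.
  intros Hk Hodd Hpos Hfeas.
  destruct (packing_of_feasible _ _ _ Hfeas) as [a [neg [x [y [w [h [tall [HA Hpack]]]]]]]].
  assert (Ha : forall j, (j < 2 * k)%nat -> (1 <= a j)%nat)
    by (intros j Hj; exact (proj1 (Forall_forall _ _) Hpos _ (HA j Hj))).
  assert (HM : 1 <= INR (maxA A)).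
  { apply (le_INR 1).
    pose proof (le_maxA _ _ (HA 0%nat ltac:(lia))). pose proof (Ha 0%nat ltac:(lia)). lia. }
  destruct (packing_balanced k (INR (maxA A)) (bigN A k) _ Hk Hodd ltac:(lra)
              (instance_short_side_large A k Hk HM) _ _ _ _ _ Hpack) as [L [HL [HLk HLsum]]].
  destruct (signed_zero_sum_split k a neg L ltac:(lia) HL (fun j Hj => Ha j (HLk j Hj)) HLsum)
    as [f [Hf Hm]].
  exists f. split; [|exact Hm].
  intros i Hi. destruct (proj1 (in_map_iff _ _ _) (Hf i Hi)) as [j [<- Hj]].
  exact (HA j (HLk j Hj)).
Qed.
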